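(* Let $g\in\mathcal{G}$ be an $\mathbb{S}$-nearly periodic function that is bounded above by a sub-polynomial function. Then there exist $\alpha>0$ and an increasing sequence $(y_k)$ of positive integers such that $g(y_k)\le y_k^{-\alpha}$ for all $k$ and, for every $x\in\mathbb{N}$, $\lim_{k\to\infty} g(x+y_k)=g(x)$.
   Context: $\mathcal{G}=\{g:\mathbb{Z}_{\ge0}\to\mathbb{R}: g(0)=0,\ g(1)=1,\ g(x)>0\ \forall x>0\}$. A function $f:\mathbb{R}_{\ge0}\to\mathbb{R}_{\ge0}$ is sub-polynomial if for every $\alpha>0$, $\lim_{x\to\infty}x^\alpha f(x)=\infty$ and $\lim_{x\to\infty}x^{-\alpha}f(x)=0$. For a set $\mathcal{S}$ of functions, $g$ is $\mathcal{S}$-nearly periodic if (1) there is $\alpha>0$ such that for every $N>0$ there exist $x,y\in\mathbb{N}$, $x<y$, $y\ge N$ with $g(y)\le g(x)/y^\alpha$ (such $y$ is called an $\alpha$-period of $g$); and (2) for every $\alpha>0$ and every $h\in\mathcal{S}$ there is $N_1>0$ such that for all $\alpha$-periods $y\ge N_1$ and all $x<y$ with $g(y)y^\alpha\le g(x)$, $|g(x+y)-g(x)|\le \min\{g(x),g(x+y)\}h(y)$. $\mathbb{S}$ denotes the set of non-increasing sub-polynomial functions on $\mathbb{Z}_{\ge0}$. *)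

From Stdlib Require Export Reals Lra.
Open Scope R_scope.

Definition in_G (g : nat -> R) : Prop :=
  g 0%nat = 0 /\ g 1%nat = 1 /\ (forall x : nat, (0 < x)%nat -> 0 < g x).

(* Sub-polynomial function f : R_{>=0} -> R_{>=0} (represented as R -> R,
   nonnegative on [0,oo)); x^a is Rpower x a, only evaluated for x > 0. *)
Definition subpoly_R (f : R -> R) : Prop :=
  (forall x, 0 <= x -> 0 <= f x) /\
  (forall a, 0 < a ->
     (forall M, exists X, forall x, X <= x -> 0 < x -> M <= Rpower x a * f x) /\
     (forall eps, 0 < eps -> exists X, forall x, X <= x -> 0 < x ->
        Rabs (Rpower x (- a) * f x) < eps)).

Definition subpoly_N (f : nat -> R) : Prop :=
  (forall n, 0 <= f n) /\
  (forall a, 0 < a ->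
     (forall M, exists N : nat, forall n : nat, (N <= n)%nat -> (0 < n)%nat ->
        M <= Rpower (INR n) a * f n) /\
     (forall eps, 0 < eps -> exists N : nat, forall n : nat, (N <= n)%nat -> (0 < n)%nat ->
        Rabs (Rpower (INR n) (- a) * f n) < eps)).

Definition in_SS (h : nat -> R) : Prop :=
  subpoly_N h /\ (forall m n : nat, (m <= n)%nat -> h n <= h m).

Definition alpha_period (g : nat -> R) (a : R) (y : nat) : Prop :=
  exists x : nat, (x < y)%nat /\ g y <= g x / Rpower (INR y) a.

Definition nearly_periodic (S : (nat -> R) -> Prop) (g : nat -> R) : Prop :=
  (exists a, 0 < a /\ forall N : nat, (0 < N)%nat ->
     exists x y : nat, (x < y)%nat /\ (N <= y)%nat /\ g y <= g x / Rpower (INR y) a) /\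
  (forall a, 0 < a -> forall h, S h -> exists N1 : nat,
     forall y : nat, alpha_period g a y -> (N1 <= y)%nat ->
     forall x : nat, (x < y)%nat -> g y * Rpower (INR y) a <= g x ->
       Rabs (g (x + y)%nat - g x) <= Rmin (g x) (g (x + y)%nat) * h y).

From Stdlib Require Import Reals Lra Lia IndefiniteDescription.

(* Along the periods y of the first condition, g(y) y^a <= g(x) for some x < y, and g(x) grows
   slower than any power of y because g is dominated by a sub-polynomial function; hence g(y)
   itself decays polynomially, g(y) <= y^(-a/4) once y is large. Such periods y_k then satisfy
   g(y_k) y_k^(a/8) -> 0, so for each fixed x > 0 the second condition eventually applies at x
   and, used with a small constant function h (constants lie in S), forces g(x + y_k) -> g(x). *)

Lemma in_G_nonneg (g : nat -> R) : in_G g -> forall n, 0 <= g n.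
Proof. intros [g0 [_ gpos]] [|n]; [lra | left; apply gpos; lia]. Qed.

Lemma Rpower_pos (x c : R) : 0 < Rpower x c.
Proof. apply exp_pos. Qed.

Lemma Rpower_ge_1 (x c : R) : 1 <= x -> 0 <= c -> 1 <= Rpower x c.
Proof. intros hx hc. rewrite <- (Rpower_O x) by lra. apply Rle_Rpower; lra. Qed.

Lemma Rpower_INR_unbounded (b M : R) : 0 < b ->
  exists N : nat, forall n : nat, (N <= n)%nat -> M <= Rpower (INR n) b.
Proof.
  intros hb. set (T := exp (Rabs M / b)).
  destruct (INR_unbounded T) as [N HN]. exists N. intros n hn.
  apply le_INR in hn.
  assert (hT : Rpower T b = exp (Rabs M)).
  { unfold Rpower, T. rewrite ln_exp. f_equal. field. lra. }
  assert (Rpower T b <= Rpower (INR n) b).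
  { apply Rle_Rpower_l; [lra|]. split; [apply exp_pos | lra]. }
  pose proof (exp_ineq1_le (Rabs M)). pose proof (Rle_abs M). lra.
Qed.

Lemma in_SS_const (c : R) : 0 < c -> in_SS (fun _ => c).
Proof.
  intros hc. split; [split|]; [intros; lra| |intros; lra].
  intros a ha. split.
  - intros M. destruct (Rpower_INR_unbounded a (M / c) ha) as [N HN].
    exists N. intros n hn _. specialize (HN n hn).
    apply (Rmult_le_compat_r c) in HN; [|lra].
    replace (M / c * c) with M in HN by (field; lra). exact HN.
  - intros eps heps. destruct (Rpower_INR_unbounded a (2 * c / eps) ha) as [N HN].
    exists N. intros n hn _. specialize (HN n hn).
    rewrite Rpower_Ropp. set (P := Rpower (INR n) a) in *.
    assert (hP : 0 < P) by apply Rpower_pos.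
    assert (hPeps : 2 * c <= P * eps).
    { apply (Rmult_le_compat_r eps) in HN; [|lra].
      replace (2 * c / eps * eps) with (2 * c) in HN by (field; lra). lra. }
    rewrite Rabs_pos_eq.
    + apply (Rmult_lt_reg_l P); [exact hP|].
      replace (P * (/ P * c)) with c by (field; lra). lra.
    + apply Rmult_le_pos; [left; apply Rinv_0_lt_compat|]; lra.
Qed.

Lemma prefix_bounded (g : nat -> R) (m : nat) :
  exists C, 1 <= C /\ forall n : nat, (n < m)%nat -> g n <= C.
Proof.
  induction m as [|m [C [hC HC]]].
  - exists 1. split; [lra | intros; lia].
  - exists (Rmax C (g m)). split.
    + pose proof (Rmax_l C (g m)). lra.
    + intros n hn. destruct (Nat.eq_dec n m) as [->|hnm].
      * apply Rmax_r.
      * pose proof (Rmax_l C (g m)). pose proof (HC n ltac:(lia)). lra.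
Qed.

Lemma subpoly_R_lt_Rpower (f : R -> R) (c : R) : subpoly_R f -> 0 < c ->
  exists X, forall x, X <= x -> 0 < x -> f x < Rpower x c.
Proof.
  intros [_ hf] hc. destruct (proj2 (hf c hc) 1 Rlt_0_1) as [X HX].
  exists X. intros x hX hx. specialize (HX x hX hx).
  rewrite Rpower_Ropp in HX. apply Rabs_def2 in HX as [HX _].
  pose proof (Rpower_pos x c).
  apply (Rmult_lt_compat_l (Rpower x c)) in HX; [|lra].
  replace (Rpower x c * (/ Rpower x c * f x)) with (f x) in HX by (field; lra). lra.
Qed.

Lemma subpoly_dominated_bound (g : nat -> R) (f : R -> R) (c : R) :
  subpoly_R f -> (forall x : nat, g x <= f (INR x)) -> 0 < c ->
  exists C, forall x y : nat, (0 < y)%nat -> (x <= y)%nat ->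
    g x <= C * Rpower (INR y) c.
Proof.
  intros hf hgf hc. destruct (subpoly_R_lt_Rpower f c hf hc) as [X HX].
  destruct (INR_unbounded (Rmax X 0)) as [N HN].
  destruct (prefix_bounded g N) as [C [hC HC]].
  exists C. intros x y hy hxy.
  assert (hy1 : 1 <= INR y) by (apply (le_INR 1); lia).
  assert (hyc : 1 <= Rpower (INR y) c) by (apply Rpower_ge_1; lra).
  destruct (Nat.lt_ge_cases x N) as [hxN|hxN].
  - pose proof (HC x hxN). nra.
  - apply le_INR in hxN. pose proof (Rmax_l X 0). pose proof (Rmax_r X 0).
    assert (Rpower (INR x) c <= Rpower (INR y) c).
    { apply Rle_Rpower_l; [lra|]. split; [lra|]. apply le_INR, hxy. }
    pose proof (HX (INR x) ltac:(lra) ltac:(lra)). pose proof (hgf x). nra.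
Qed.

Lemma alpha_period_mono (g : nat -> R) (a b : R) (y : nat) :
  (forall n, 0 <= g n) -> 0 <= b <= a -> (0 < y)%nat ->
  alpha_period g a y -> alpha_period g b y.
Proof.
  intros hg hab hy [x [hxy hgy]]. exists x. split; [exact hxy|].
  assert (hy1 : 1 <= INR y) by (apply (le_INR 1); lia).
  assert (Rpower (INR y) b <= Rpower (INR y) a) by (apply Rle_Rpower; lra).
  assert (1 <= Rpower (INR y) b) by (apply Rpower_ge_1; lra).
  unfold Rdiv in *. pose proof (hg x).
  assert (/ Rpower (INR y) a <= / Rpower (INR y) b) by (apply Rinv_le_contravar; lra).
  nra.
Qed.

(* [g y <= g x / y^a <= C y^(a/2) / y^a <= y^(a/4) y^(a/2) / y^a = y^(-a/4)] *)
Lemma alpha_period_decay (g : nat -> R) (a C : R) (y : nat) :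
  (forall x : nat, (x <= y)%nat -> g x <= C * Rpower (INR y) (a / 2)) ->
  alpha_period g a y -> C <= Rpower (INR y) (a / 4) ->
  g y <= Rpower (INR y) (- (a / 4)).
Proof.
  intros hbound [x [hxy hgy]] hC.
  replace (- (a / 4)) with (a / 4 + a / 2 + - a) by field.
  rewrite !Rpower_plus, Rpower_Ropp.
  pose proof (Rpower_pos (INR y) (a / 2)). pose proof (Rpower_pos (INR y) a).
  assert (hinv : 0 < / Rpower (INR y) a) by (apply Rinv_0_lt_compat; lra).
  pose proof (hbound x ltac:(lia)) as hgx.
  unfold Rdiv in hgy.
  assert (g x * / Rpower (INR y) a <= C * Rpower (INR y) (a / 2) * / Rpower (INR y) a)
    by (apply Rmult_le_compat_r; lra).
  assert (C * Rpower (INR y) (a / 2) <= Rpower (INR y) (a / 4) * Rpower (INR y) (a / 2))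
    by (apply Rmult_le_compat_r; lra).
  assert (C * Rpower (INR y) (a / 2) * / Rpower (INR y) a
          <= Rpower (INR y) (a / 4) * Rpower (INR y) (a / 2) * / Rpower (INR y) a)
    by (apply Rmult_le_compat_r; lra).
  lra.
Qed.

Lemma decay_Un_cv (u : nat -> R) (y : nat -> nat) (c : R) : 0 < c ->
  (forall k, (k <= y k)%nat) -> (forall k, 0 <= u k) ->
  (forall k, u k <= Rpower (INR (y k)) (- c)) ->
  Un_cv (fun k => u k * Rpower (INR (y k)) (c / 2)) 0.
Proof.
  intros hc hy hu hdec eps heps.
  destruct (Rpower_INR_unbounded (c / 2) (2 / eps) ltac:(lra)) as [N HN].
  exists N. intros k hk. specialize (HN (y k) ltac:(specialize (hy k); lia)).
  specialize (hdec k). pose proof (hu k).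
  replace (- c) with (- (c / 2) + - (c / 2)) in hdec by field.
  rewrite Rpower_plus, Rpower_Ropp in hdec.
  set (P := Rpower (INR (y k)) (c / 2)) in *.
  assert (hP : 0 < P) by apply Rpower_pos.
  assert (hPeps : 2 <= P * eps).
  { apply (Rmult_le_compat_r eps) in HN; [|lra].
    replace (2 / eps * eps) with 2 in HN by (field; lra). lra. }
  assert (hinv : / P * P = 1) by (field; lra).
  unfold R_dist. rewrite Rminus_0_r, Rabs_pos_eq by nra. nra.
Qed.

Lemma nearly_periodic_Un_cv (g : nat -> R) (b : R) (y : nat -> nat) :
  in_G g -> nearly_periodic in_SS g -> 0 < b ->
  (forall k, (k <= y k)%nat) -> (forall k, (0 < y k)%nat) ->
  (forall k, alpha_period g b (y k)) ->
  Un_cv (fun k => g (y k) * Rpower (INR (y k)) b) 0 ->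
  forall x : nat, Un_cv (fun k => g (x + y k)%nat) (g x).
Proof.
  intros hG [_ hnp] hb hy hy0 hper hcv x eps heps.
  pose proof (in_G_nonneg g hG) as gnn. destruct hG as [g0 [_ gpos]].
  assert (hyb : forall k, 1 <= Rpower (INR (y k)) b).
  { intros k. apply Rpower_ge_1; [apply (le_INR 1), hy0 | lra]. }
  destruct x as [|x].
  - destruct (hcv eps heps) as [K HK]. exists K. intros k hk.
    specialize (HK k hk). pose proof (gnn (y k)). pose proof (hyb k).
    unfold R_dist in *. rewrite Rminus_0_r, Rabs_pos_eq in HK by nra.
    simpl. rewrite g0, Rminus_0_r, Rabs_pos_eq by lra. nra.
  - set (gx := g (S x)). assert (hgx : 0 < gx) by (apply gpos; lia).
    assert (hh : 0 < eps / (2 * gx)) by (apply Rdiv_lt_0_compat; lra).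
    destruct (hnp b hb _ (in_SS_const _ hh)) as [N1 HN1].
    destruct (hcv gx hgx) as [K HK].
    exists (Nat.max K (Nat.max N1 (S (S x)))). intros k hk.
    pose proof (hy k). pose proof (gnn (y k)). pose proof (hyb k).
    specialize (HK k ltac:(lia)). unfold R_dist in *.
    rewrite Rminus_0_r, Rabs_pos_eq in HK by nra.
    assert (hsmall : g (y k) * Rpower (INR (y k)) b <= gx) by lra.
    specialize (HN1 (y k) (hper k) ltac:(lia) (S x) ltac:(lia) hsmall).
    fold gx in HN1 |- *. pose proof (Rmin_l gx (g (S x + y k)%nat)).
    assert (Rmin gx (g (S x + y k)%nat) * (eps / (2 * gx)) <= gx * (eps / (2 * gx))) by nra.
    replace (gx * (eps / (2 * gx))) with (eps / 2) in * by (field; lra). lra.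
Qed.

Lemma unbounded_strictly_increasing_seq (P : nat -> Prop) :
  (forall N : nat, exists n, (N <= n)%nat /\ P n) ->
  exists y : nat -> nat, (forall k, (y k < y (S k))%nat) /\ (forall k, P (y k)).
Proof.
  intros hP. destruct (functional_choice _ hP) as [next hnext].
  exists (fix y k := match k with O => next O | S k => next (S (y k)) end).
  split.
  - intros k. exact (proj1 (hnext _)).
  - intros [|k]; exact (proj2 (hnext _)).
Qed.

Lemma strictly_increasing_ge_index (y : nat -> nat) :
  (forall k, (y k < y (S k))%nat) -> forall k, (k <= y k)%nat.
Proof. intros hy k. induction k; [lia|]. specialize (hy k). lia. Qed.

Theorem proposition29 (g : nat -> R) :
  in_G g ->
  nearly_periodic in_SS g ->
  (exists f : R -> R, subpoly_R f /\ forall x : nat, g x <= f (INR x)) ->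
  exists a : R, 0 < a /\
  exists y : nat -> nat,
    (forall k, (y k < y (S k))%nat) /\
    (forall k, (0 < y k)%nat) /\
    (forall k, g (y k) <= Rpower (INR (y k)) (- a)) /\
    (forall x : nat, Un_cv (fun k => g (x + y k)%nat) (g x)).
Proof.
  intros hG hnp [f [hf hgf]].
  destruct (proj1 hnp) as [a [ha hper]].
  pose proof (in_G_nonneg g hG) as gnn.
  destruct (subpoly_dominated_bound g f (a / 2) hf hgf ltac:(lra)) as [C hbound].
  destruct (Rpower_INR_unbounded (a / 4) C ltac:(lra)) as [N0 HN0].
  destruct (unbounded_strictly_increasing_seq
              (fun y => (0 < y)%nat /\ alpha_period g a y /\ C <= Rpower (INR y) (a / 4)))
    as [y [hinc hgood]].
  { intros N. destruct (hper (Nat.max N (Nat.max N0 1)) ltac:(lia)) as [x [y [? [? ?]]]].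
    exists y. repeat split; [lia | lia | exists x; auto | apply HN0; lia]. }
  assert (hy := strictly_increasing_ge_index y hinc).
  assert (hdecay : forall k, g (y k) <= Rpower (INR (y k)) (- (a / 4))).
  { intros k. destruct (hgood k) as [hy0 [hp hC]].
    apply (alpha_period_decay g a C); [intros; apply hbound; auto | exact hp | exact hC]. }
  exists (a / 4). split; [lra|]. exists y.
  repeat split; [exact hinc | apply hgood | apply hdecay |].
  apply (nearly_periodic_Un_cv g (a / 4 / 2)); auto; [lra | apply hgood | |].
  - intros k. destruct (hgood k) as [hy0 [hp _]].
    apply (alpha_period_mono g a); auto; lra.
  - apply decay_Un_cv; auto; lra.
Qed.
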